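(* If a vertical line $\Gamma$ sweeps from left to right, the only values of $x(\Gamma)$ at which the shadow of $\mathrm{OPT}$ at $\Gamma$ changes are $x$-coordinates of reflection points of $\mathrm{OPT}$. In particular, any subpath of $\mathrm{OPT}$ that does not contain a reflection point (as an interior point) has shadow $1$ throughout its length.
   Context: Instance: vertical line segments $s_1,\dots,s_n$ in $\mathbb{R}^2$, each of length $1$, with pairwise distinct $x$-coordinates. A tour is a cyclic sequence of points $p_1,\dots,p_\sigma$, each on some segment, with every segment containing at least one $p_j$; the straight segments joining consecutive points are legs. $\mathrm{OPT}$ is a fixed minimum-cost tour, oriented $p_1\to p_2\to\cdots$, with no two consecutive points on the same segment (no vertical legs) and not self-crossing. For a point $p_j$ of $\mathrm{OPT}$ on segment $s$, $p_j$ is a reflection point if both of its incident legs lie in the half-plane $x\le x(s)$ or both lie in $x\ge x(s)$. Shadow: for a collection of legs and $x_0$, the shadow at $x_0$ is the number of legs intersecting the vertical line $x=x_0$; the shadow of a path over a range is the maximum of this over the range. *)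

From HB Require Import structures.
From mathcomp Require Import all_boot all_order all_algebra.
From mathcomp Require Import reals.
Set Implicit Arguments. Unset Strict Implicit. Unset Printing Implicit Defensive.
Import Order.TTheory GRing.Theory Num.Theory.
Local Open Scope ring_scope.

Section Defs.
Variable R : realType.
Notation pt := (R * R)%type.

Definition on_seg (a b : nat -> R) (i : nat) (q : pt) : bool :=
  (q.1 == a i) && (b i <= q.2 <= b i + 1).

Definition nxt (sigma j : nat) : nat := (j.+1 %% sigma)%N.
Definition prv (sigma j : nat) : nat := ((j + sigma.-1) %% sigma)%N.

Definition is_tour (n : nat) (a b : nat -> R) (sigma : nat) (p : nat -> pt) : Prop :=
  (0 < sigma)%N /\
  (forall j, (j < sigma)%N -> exists2 i, (i < n)%N & on_seg a b i (p j)) /\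
  (forall i, (i < n)%N -> exists2 j, (j < sigma)%N & on_seg a b i (p j)).

Definition dist (q r : pt) : R := Num.sqrt ((q.1 - r.1) ^+ 2 + (q.2 - r.2) ^+ 2).

Definition cost (sigma : nat) (p : nat -> pt) : R :=
  \sum_(j < sigma) dist (p j) (p (nxt sigma j)).

Definition is_opt_tour (n : nat) (a b : nat -> R) (sigma : nat) (p : nat -> pt) : Prop :=
  is_tour n a b sigma p /\
  forall sigma' (p' : nat -> pt), is_tour n a b sigma' p' -> cost sigma p <= cost sigma' p'.

Definition no_vertical_legs (n : nat) (a b : nat -> R) (sigma : nat) (p : nat -> pt) : Prop :=
  forall j i, (j < sigma)%N -> (i < n)%N ->
    ~~ (on_seg a b i (p j) && on_seg a b i (p (nxt sigma j))).

Definition legs_cross (q1 q2 r1 r2 : pt) : Prop :=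
  exists t u : R, [/\ 0 < t < 1, 0 < u < 1,
    q1.1 + t * (q2.1 - q1.1) = r1.1 + u * (r2.1 - r1.1),
    q1.2 + t * (q2.2 - q1.2) = r1.2 + u * (r2.2 - r1.2) &
    (q2.1 - q1.1) * (r2.2 - r1.2) - (q2.2 - q1.2) * (r2.1 - r1.1) != 0].

Definition not_self_crossing (sigma : nat) (p : nat -> pt) : Prop :=
  forall j k, (j < sigma)%N -> (k < sigma)%N -> j != k ->
    ~ legs_cross (p j) (p (nxt sigma j)) (p k) (p (nxt sigma k)).

Definition is_reflection (n : nat) (a b : nat -> R) (sigma : nat) (p : nat -> pt)
    (j : nat) : Prop :=
  exists2 i, (i < n)%N & on_seg a b i (p j) /\
    (((p (prv sigma j)).1 <= a i /\ (p (nxt sigma j)).1 <= a i) \/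
     (a i <= (p (prv sigma j)).1 /\ a i <= (p (nxt sigma j)).1)).

Definition leg_hits (x0 : R) (q r : pt) : bool :=
  (Num.min q.1 r.1 <= x0) && (x0 <= Num.max q.1 r.1).

Definition shadow (sigma : nat) (p : nat -> pt) (js : seq nat) (x0 : R) : nat :=
  count (fun j => leg_hits x0 (p j) (p (nxt sigma j))) js.

(* legs of the subpath p_i, p_{i+1}, ..., p_{i+m} (indices mod sigma) *)
Definition subpath_legs (sigma i m : nat) : seq nat :=
  [seq ((i + k) %% sigma)%N | k <- iota 0 m].

End Defs.

From HB Require Import structures.
From mathcomp Require Import all_boot all_order all_algebra.
From mathcomp Require Import reals.
From mathcomp Require Import lra zify.
Import Order.TTheory GRing.Theory Num.Theory.
Local Open Scope ring_scope.

(* A vertex that is not a reflection point lies strictly between the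
   x-coordinates of its two neighbours, so the legs entering and leaving it
   run in the same horizontal direction.  Moving a vertical line from x0 to
   x1 changes the hit indicator of a leg by its direction (+1 or -1) times
   [start in (x0, x1)] - [end in (x0, x1)]; summing around the cycle, each
   vertex in (x0, x1) contributes (outgoing - incoming direction), which is
   0 unless it is a reflection point.  Along a subpath without interior
   reflection points the x-coordinates are monotone, so a line strictly
   inside its x-range is crossed exactly once.  Neither argument uses
   optimality, distinct segment abscissae, absence of vertical legs or
   non-crossing: the statement holds for every tour. *)

Lemma nxtK s k : (k < s)%N -> prv s (nxt s k) = k.
Proof.
move=> ks; rewrite /prv /nxt modnDml.
have -> : (k.+1 + s.-1 = k + s)%N by lia.
by rewrite modnDr modn_small.
Qed.

Lemma prvK s k : (k < s)%N -> nxt s (prv s k) = k.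
Proof.
move=> ks; rewrite /prv /nxt -addn1 modnDml.
have -> : (k + s.-1 + 1 = k + s)%N by lia.
by rewrite modnDr modn_small.
Qed.

Lemma nxt_addn_mod s i k : nxt s ((i + k) %% s) = ((i + k.+1) %% s)%N.
Proof. by rewrite /nxt -addn1 modnDml addn1 addnS. Qed.

Lemma prv_addn_mod s i k :
  (0 < s)%N -> (0 < k)%N -> prv s ((i + k) %% s) = ((i + k.-1) %% s)%N.
Proof.
move=> s0 k0; rewrite /prv modnDml.
have -> : (i + k + s.-1 = i + k.-1 + s)%N by lia.
by rewrite modnDr.
Qed.

Lemma sum_nxt {V : nmodType} s (F : nat -> V) :
  \sum_(k < s) F (nxt s k) = \sum_(k < s) F k.
Proof. by rewrite [RHS](reindex_inj (@ordS_inj s)). Qed.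

Lemma natr_count_iota {V : pzSemiRingType} (A : pred nat) s :
  (count A (iota 0 s))%:R = \sum_(k < s) (A k)%:R :> V.
Proof.
rewrite -sumn_count sumnE big_map natr_sum.
by rewrite -(big_mkord xpredT (fun k => (A k)%:R)) /index_iota subn0.
Qed.

Lemma count_flips_nondecreasing (b : nat -> bool) m :
  (forall k, (k < m)%N -> b k ==> b k.+1) ->
  count (fun k => b k != b k.+1) (iota 0 m) = (b 0%N != b m).
Proof.
elim: m => [|m IH] mono; first by rewrite eqxx.
have mono' k : (k < m)%N -> b k ==> b k.+1 by move=> km; apply: mono; lia.
have b0m : b 0%N ==> b m.
  suff mono0 k : (k <= m)%N -> b 0%N ==> b k by exact: mono0.
  elim: k => [|k IHk] km; first exact: implybb.
  by apply/implyP => /(implyP (IHk (ltnW km))) /(implyP (mono' k km)).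
rewrite -addn1 iotaD count_cat IH //= add0n addn0 addn1.
move: b0m (mono m (ltnSn m)).
by case: (b 0%N); case: (b m); case: (b m.+1).
Qed.

Lemma count_flips_nonincreasing (b : nat -> bool) m :
  (forall k, (k < m)%N -> b k.+1 ==> b k) ->
  count (fun k => b k != b k.+1) (iota 0 m) = (b 0%N != b m).
Proof.
move=> mono; rewrite -(inj_eq negb_inj) -(count_flips_nondecreasing (fun k => ~~ b k)).
  by apply: eq_count => k /=; rewrite (inj_eq negb_inj).
by move=> k km; rewrite implybNN mono.
Qed.

Section MonotoneSequences.
Context {disp : Order.disp_t} {T : orderType disp}.
Local Open Scope order_scope.
Implicit Types (q : nat -> T) (m : nat).

Lemma monotone_of_locally_monotone {q m} :
  (forall k, (0 < k < m)%N -> (q k.-1 < q k < q k.+1) \/ (q k.+1 < q k < q k.-1)) ->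
  (forall k, (k < m)%N -> q k <= q k.+1) \/ (forall k, (k < m)%N -> q k.+1 <= q k).
Proof.
move=> local; have [q01|q10] := leP (q 0%N) (q 1%N); [left|right].
- elim=> [//|k IH] km; have km' : (0 < k.+1 < m)%N by lia.
  case: (local _ km') => /andP[_ lt_k]; first exact: ltW.
  by move: lt_k; rewrite ltNge IH //; lia.
- elim=> [|k IH] km; first exact: ltW q10.
  have km' : (0 < k.+1 < m)%N by lia.
  case: (local _ km') => /andP[lt_k _]; last exact: ltW.
  by move: lt_k; rewrite ltNge IH //; lia.
Qed.

Lemma count_crossings_monotone {q m x kl kr} :
  (forall k, (k < m)%N -> q k <= q k.+1) \/ (forall k, (k < m)%N -> q k.+1 <= q k) ->
  (kl <= m)%N -> (kr <= m)%N -> q kl < x -> x <= q kr ->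
  count (fun k => (q k < x) != (q k.+1 < x)) (iota 0 m) = 1%N.
Proof.
move=> mono klm krm qkl qkr.
have convex : {in [pred k | (k <= m)%N] &,
    forall i j k, (i < k < j)%O -> k \in [pred k | (k <= m)%N]}.
  by move=> i j _; rewrite !inE => jm k /andP[_ kj]; apply: ltnW (leq_trans kj jm).
case: mono => [inc|dec].
- have homo := Order.NatMonotonyTheory.nondecn_inP convex (fun k _ => inc k).
  rewrite count_flips_nonincreasing; last first.
    by move=> k km; apply/implyP; exact: le_lt_trans (inc k km).
  rewrite (le_lt_trans (homo 0%N kl (leq0n m) klm (leq0n kl)) qkl).
  by rewrite ltNge (le_trans qkr (homo kr m krm (leqnn m) krm)).
- have homo := Order.NatMonotonyTheory.nonincn_inP convex (fun k _ => dec k).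
  rewrite count_flips_nondecreasing; last first.
    by move=> k km; apply/implyP; exact: le_lt_trans (dec k km).
  rewrite (le_lt_trans (homo m kl (leqnn m) klm klm) qkl).
  by rewrite ltNge (le_trans qkr (homo kr 0%N krm (leq0n m) (leq0n kr))).
Qed.

End MonotoneSequences.

Section Legs.
Context {R : realType}.
Implicit Types (x : R) (P Q : R * R).

Definition leg_dir P Q : R := if P.1 < Q.1 then 1 else -1.

Definition in_strip (x0 x1 : R) P : R := (x0 < P.1 < x1)%R%:R.

Lemma leg_hitsE x P Q :
  x != P.1 -> x != Q.1 -> leg_hits x P Q = ((P.1 < x) != (Q.1 < x)).
Proof.
rewrite /leg_hits ge_min le_max => /negPf xP /negPf xQ.
by case: (ltgtP P.1 x) xP; case: (ltgtP Q.1 x) xQ.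
Qed.

Lemma leg_hits_change (x0 x1 : R) P Q :
  x0 < x1 -> x0 != P.1 -> x0 != Q.1 -> x1 != P.1 -> x1 != Q.1 ->
  (leg_hits x1 P Q)%:R - (leg_hits x0 P Q)%:R =
    leg_dir P Q * (in_strip x0 x1 P - in_strip x0 x1 Q).
Proof.
move=> x01 /negPf x0P /negPf x0Q /negPf x1P /negPf x1Q.
rewrite !leg_hitsE ?x0P ?x0Q ?x1P ?x1Q // /leg_dir /in_strip.
case: (ltgtP P.1 x0) x0P => // ? _; case: (ltgtP P.1 x1) x1P => // ? _;
case: (ltgtP Q.1 x0) x0Q => // ? _; case: (ltgtP Q.1 x1) x1Q => // ? _;
case: (ltgtP P.1 Q.1) => ? /=; rewrite ?mulr1n ?mulr0n; lra.
Qed.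

End Legs.

Section Tour.
Variables (R : realType) (n : nat) (a b : nat -> R) (sigma : nat) (p : nat -> R * R).
Hypothesis tour : is_tour n a b sigma p.

Lemma nonreflection_monotone j :
  (j < sigma)%N -> ~ is_reflection n a b sigma p j ->
  ((p (prv sigma j)).1 < (p j).1 < (p (nxt sigma j)).1) \/
  ((p (nxt sigma j)).1 < (p j).1 < (p (prv sigma j)).1).
Proof.
move=> js nrefl; have [i ilt onij] := tour.2.1 j js.
have /andP[/eqP -> _] := onij.
set u := (p (prv sigma j)).1; set v := (p (nxt sigma j)).1.
have not_left : ~ (u <= a i /\ v <= a i) by move=> h; apply: nrefl; exists i; tauto.
have not_right : ~ (a i <= u /\ a i <= v) by move=> h; apply: nrefl; exists i; tauto.
have [ui|iu] := ltP u (a i); [left|right].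
- rewrite /= ltNge; apply/negP => vi; exact: not_left (conj (ltW ui) vi).
- have vi : v < a i by rewrite ltNge; apply/negP => iv; exact: not_right (conj iu iv).
  rewrite vi ltNge; apply/negP => ui; exact: not_left (conj ui (ltW vi)).
Qed.

Lemma leg_dir_nonreflection j :
  (j < sigma)%N -> ~ is_reflection n a b sigma p j ->
  leg_dir (p (prv sigma j)) (p j) = leg_dir (p j) (p (nxt sigma j)).
Proof.
move=> js /(nonreflection_monotone _ js) [] /andP[lt1 lt2]; rewrite /leg_dir.
  by rewrite lt1 lt2.
by rewrite (lt_gtF lt1) (lt_gtF lt2).
Qed.

Lemma shadow_constant_between_reflections (x0 x1 : R) :
  x0 < x1 ->
  (forall j, (j < sigma)%N -> x0 != (p j).1) ->
  (forall j, (j < sigma)%N -> x1 != (p j).1) ->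
  (forall j, (j < sigma)%N -> is_reflection n a b sigma p j -> ~ (x0 < (p j).1 < x1)) ->
  shadow sigma p (iota 0 sigma) x0 = shadow sigma p (iota 0 sigma) x1.
Proof.
move=> x01 off0 off1 norefl.
have nxt_lt k : (nxt sigma k < sigma)%N by rewrite ltn_pmod // tour.1.
pose d k := leg_dir (p k) (p (nxt sigma k)).
pose w k := in_strip x0 x1 (p k).
apply/eqP; rewrite eq_sym -(eqr_nat R) -subr_eq0 /shadow !natr_count_iota -sumrB.
rewrite (eq_bigr (fun k : 'I_sigma => d k * (w k - w (nxt sigma k)))); last first.
  by move=> k _; apply: leg_hits_change; rewrite ?off0 ?off1.
have shift : \sum_(k < sigma) d k * w (nxt sigma k) = \sum_(k < sigma) d (prv sigma k) * w k.
  rewrite -(sum_nxt sigma (fun k => d (prv sigma k) * w k)).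
  by apply: eq_bigr => k _; rewrite nxtK.
under eq_bigr do rewrite mulrBr.
rewrite sumrB shift -sumrB big1 // => k _.
rewrite -mulrBl /w /in_strip.
have [in_k|] := boolP (x0 < _ < x1); last by rewrite mulr0.
rewrite /d prvK // leg_dir_nonreflection ?subrr ?mul0r //.
by move=> refl; exact: norefl k (ltn_ord k) refl in_k.
Qed.

Lemma shadow_subpath_eq1 i m :
  (forall k, (0 < k < m)%N -> ~ is_reflection n a b sigma p ((i + k) %% sigma)%N) ->
  forall x0 : R,
    (exists2 k, (k <= m)%N & (p ((i + k) %% sigma)%N).1 < x0) ->
    (exists2 k, (k <= m)%N & x0 < (p ((i + k) %% sigma)%N).1) ->
    (forall k, (k <= m)%N -> x0 != (p ((i + k) %% sigma)%N).1) ->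
    shadow sigma p (subpath_legs sigma i m) x0 = 1%N.
Proof.
move=> norefl x0 [kl klm xl] [kr krm xr] off.
have s0 : (0 < sigma)%N := tour.1.
pose q k := (p ((i + k) %% sigma)%N).1.
have local k : (0 < k < m)%N -> (q k.-1 < q k < q k.+1) \/ (q k.+1 < q k < q k.-1).
  move=> km; have := nonreflection_monotone _ (ltn_pmod (i + k) s0) (norefl k km).
  by rewrite prv_addn_mod ?nxt_addn_mod //; case/andP: km.
rewrite /shadow /subpath_legs count_map.
rewrite (eq_in_count (a2 := fun k => (q k < x0) != (q k.+1 < x0))); last first.
  move=> k; rewrite mem_iota add0n => /andP[_ km] /=.
  rewrite nxt_addn_mod leg_hitsE //; apply: off; lia.
exact: count_crossings_monotone (monotone_of_locally_monotone local) klm krm xl (ltW xr).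
Qed.

End Tour.

Theorem lemma3 (R : realType) (n : nat) (a b : nat -> R) (sigma : nat)
    (p : nat -> (R * R)%type) :
  (forall i k, (i < n)%N -> (k < n)%N -> i != k -> a i != a k) ->
  is_opt_tour n a b sigma p ->
  no_vertical_legs n a b sigma p ->
  not_self_crossing sigma p ->
  (* (1) sweeping x0 from left to right, the shadow of OPT only changes at
     x-coordinates of reflection points *)
  (forall x0 x1 : R, x0 < x1 ->
     (forall j, (j < sigma)%N -> x0 != (p j).1) ->
     (forall j, (j < sigma)%N -> x1 != (p j).1) ->
     (forall j, (j < sigma)%N -> is_reflection n a b sigma p j ->
        ~ (x0 < (p j).1 < x1)) ->
     shadow sigma p (iota 0 sigma) x0 = shadow sigma p (iota 0 sigma) x1) /\
  (* (2) a subpath p_i .. p_{i+m} with no interior reflection point has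
     shadow 1 throughout its x-range *)
  (forall i m, (i < sigma)%N -> (0 < m <= sigma)%N ->
     (forall k, (0 < k < m)%N -> ~ is_reflection n a b sigma p ((i + k) %% sigma)%N) ->
     forall x0 : R,
       (exists2 k, (k <= m)%N & (p ((i + k) %% sigma)%N).1 < x0) ->
       (exists2 k, (k <= m)%N & x0 < (p ((i + k) %% sigma)%N).1) ->
       (forall k, (k <= m)%N -> x0 != (p ((i + k) %% sigma)%N).1) ->
       shadow sigma p (subpath_legs sigma i m) x0 = 1%N).
Proof.
move=> _ [tour _] _ _; split.
- exact: shadow_constant_between_reflections.
- by move=> i m _ _; exact: shadow_subpath_eq1.
Qed.
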